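(* The functions $\Psi$ (in the correlated setting) and $\Phi^{\ge\nu-1}$ are monotone and submodular set functions on their respective domains $V\times\{0\}$ and $\hat V$.
   Context: Triggering model: for a directed graph $G=(V,E)$ and $p:E\to[0,1]$, an outcome $X=(T_v)_{v\in V}$ is obtained by having each node $v$ independently choose a subset $T_v$ of its in-neighbours $N_v$, with $T_v=S$ with probability $\prod_{u\in S}p_{uv}\prod_{u\in N_v\setminus S}(1-p_{uv})$; $\rho_X(A)$ is the set of nodes reachable from $A\subseteq V$ via arcs $\{(u,v):u\in T_v\}$. $\mathrm{BAL}(\mu,\nu)$ for integer constants $\mu\ge\nu\ge2$: instance = directed graph $G=(V,E)$, probability functions $p_1,\dots,p_\mu:E\to[0,1]$, seed sets $\mathcal I=(I_1,\dots,I_\mu)$, budget $k\ge2$. Let $\hat V=V\times[\mu]$; $\mathcal S\subseteq\hat V$ is identified with $(S_1,\dots,S_\mu)$, $S_i=\{v:(v,i)\in\mathcal S\}$. An outcome profile $\mathcal X=(X_1,\dots,X_\mu)$ consists of outcomes $X_i$ w.r.t. $p_i$ (independent in the heterogeneous setting; in the correlated setting all $p_i$ coincide and $X_1=\dots=X_\mu=X$). Campaign $i$ reaches $v$ from seeds $A_i$ if $v\in\rho_{X_i}(A_i)$. $V^j_{\mathcal X}$ is the set of nodes reached by exactly $j$ campaigns from $\mathcal I$. $\Phi^{\ge\nu-1}(\mathcal S)$ is the expected number of nodes $v\notin\bigcup_{j<\nu-1}V^j_{\mathcal X}$ reached by none or by at least $\nu$ campaigns from $(I_i\cup S_i)_i$.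 In the correlated setting, for $\mathcal T\subseteq V\times\{0\}$ with node set $T$, $\Psi(\mathcal T)=\mathbb E\big[\big|(\rho_X(T)\cap\bigcup_{j=1}^{\nu-1}V^j_{\mathcal X})\cup\bigcup_{j=\nu}^\mu V^j_{\mathcal X}\big|\big]$. *)

From HB Require Import structures.
From mathcomp Require Import all_boot all_order all_algebra.
Set Implicit Arguments. Unset Strict Implicit. Unset Printing Implicit Defensive.
Import Order.TTheory GRing.Theory Num.Theory.
Local Open Scope ring_scope.

Section Triggering.
Variables (R : realFieldType) (V : finType).

(* An outcome X = (T_v)_v : each node v chooses a set T_v of nodes. *)
Definition outcome := {ffun V -> {set V}}.

(* E u v  means that (u,v) is an arc, i.e. u is an in-neighbour of v.
   Probability of outcome X w.r.t. p : prod_v prod_{u in N_v} (p_uv or 1-p_uv);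
   choosing a non-in-neighbour has probability 0. *)
Definition outcome_prob (E : rel V) (p : V -> V -> R) (X : outcome) : R :=
  \prod_(v : V) \prod_(u : V)
     (if E u v then (if u \in X v then p u v else 1 - p u v)
      else (if u \in X v then 0 else 1)).

(* rho_X(A): nodes reachable from A via the live arcs {(u,v) : u \in T_v}. *)
Definition rho (X : outcome) (A : {set V}) : {set V} :=
  [set v | [exists a in A, connect (fun u w => u \in X w) a v]].

Variable mu : nat.

Definition profile := {ffun 'I_mu -> outcome}.

Definition ncamp (XX : profile) (A : 'I_mu -> {set V}) (v : V) : nat :=
  #|[set i : 'I_mu | v \in rho (XX i) (A i)]|.

Definition Vj (XX : profile) (I : 'I_mu -> {set V}) (j : nat) : {set V} :=
  [set v | ncamp XX I v == j].

Definition slice (S : {set V * 'I_mu}) (i : 'I_mu) : {set V} :=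
  [set v | (v, i) \in S].

Definition seedU (I : 'I_mu -> {set V}) (S : {set V * 'I_mu}) (i : 'I_mu) :=
  I i :|: slice S i.

(* realisation of the quantity inside Phi^{>= nu-1} for a fixed profile *)
Definition phi_real (nu : nat) (I : 'I_mu -> {set V}) (S : {set V * 'I_mu})
    (XX : profile) : nat :=
  #|[set v | [forall j : 'I_nu.-1, v \notin Vj XX I j] &&
             ((ncamp XX (seedU I S) v == 0%N) || (nu <= ncamp XX (seedU I S) v)%N)]|.

(* heterogeneous setting: independent outcomes X_i w.r.t. p_i *)
Definition Phi_het (E : rel V) (p : 'I_mu -> V -> V -> R) (nu : nat)
    (I : 'I_mu -> {set V}) (S : {set V * 'I_mu}) : R :=
  \sum_(XX : profile) (\prod_(i < mu) outcome_prob E (p i) (XX i)) * (phi_real nu I S XX)%:R.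

(* correlated setting: all p_i equal to p, and X_1 = ... = X_mu = X *)
Definition corr_profile (X : outcome) : profile := [ffun _ => X].

Definition Phi_corr (E : rel V) (p : V -> V -> R) (nu : nat)
    (I : 'I_mu -> {set V}) (S : {set V * 'I_mu}) : R :=
  \sum_(X : outcome) outcome_prob E p X * (phi_real nu I S (corr_profile X))%:R.

(* Psi (correlated setting); T \subseteq V x {0} identified with its node set *)
Definition Psi (E : rel V) (p : V -> V -> R) (nu : nat)
    (I : 'I_mu -> {set V}) (T : {set V}) : R :=
  \sum_(X : outcome) outcome_prob E p X *
    #|(rho X T :&: \bigcup_(j < nu | (1 <= j)%N) Vj (corr_profile X) I j)
      :|: \bigcup_(j < mu.+1 | (nu <= j)%N) Vj (corr_profile X) I j|%:R.

End Triggering.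

Definition monotone_setfun (R : realFieldType) (T : finType) (f : {set T} -> R) :=
  forall A B : {set T}, A \subset B -> f A <= f B.

Definition submodular_setfun (R : realFieldType) (T : finType) (f : {set T} -> R) :=
  forall (A B : {set T}) (x : T), A \subset B -> x \notin B ->
    f (x |: B) - f B <= f (x |: A) - f A.

From HB Require Import structures.
From mathcomp Require Import all_boot all_order all_algebra.
From mathcomp Require Import zify.
Import Order.TTheory GRing.Theory Num.Theory.
Set Implicit Arguments. Unset Strict Implicit. Unset Printing Implicit Defensive.
Local Open Scope ring_scope.

(* For a fixed outcome (profile) the realised value of Psi, and of Phi^{>= nu-1},
   is the size of a coverage set: a fixed base of nodes together with every node
   covered by some chosen seed.  For Psi the base is the set of nodes reached by
   at least nu campaigns, and a seed covers the nodes of the target region it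
   reaches.  For Phi, since nu - 1 >= 1 rules out "reached by none", a node counts
   iff it is reached by at least nu campaigns from I, or by exactly nu - 1 and
   some seed (s, i) makes campaign i reach it for the first time; so the base is
   the former set and (s, i) covers the nodes of the latter kind that it newly
   reaches.  Coverage sizes are monotone and submodular, hence so are their
   nonnegative combinations, the expectations. *)

Section Coverage.
Variables (U W : finType) (P : pred W) (Q : U -> pred W).

Definition cover (S : {set U}) : {set W} := [set w | P w || [exists x in S, Q x w]].

Lemma coverS (A B : {set U}) : A \subset B -> cover A \subset cover B.
Proof.
move=> AB; apply/subsetP => w; rewrite !inE => /orP [-> // | /existsP [x /andP [xA Qxw]]].
by apply/orP; right; apply/existsP; exists x; rewrite (subsetP AB).
Qed.

Lemma card_coverU1 (S : {set U}) (x : U) :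
  #|cover (x |: S)| = (#|cover S| + #|[set w | Q x w] :\: cover S|)%N.
Proof.
rewrite -(cardsID (cover S) (cover (x |: S))) (setIidPr (coverS (subsetU1 x S))).
congr (_ + _)%N; apply: eq_card => w; rewrite !inE.
case: (boolP (P w)) => //= _; case: (boolP [exists y in S, Q y w]) => //= /existsPn noS.
apply/existsP/idP => [[y] | Qxw]; last by exists x; rewrite !inE eqxx.
by rewrite !inE => /andP [/orP [/eqP -> | yS] Qyw] //; move: (noS y); rewrite yS Qyw.
Qed.

Variable R : realFieldType.

Lemma card_cover_monotone : monotone_setfun (fun S => #|cover S|%:R : R).
Proof. by move=> A B AB; rewrite ler_nat subset_leq_card // coverS. Qed.

Lemma card_cover_submodular : submodular_setfun (fun S => #|cover S|%:R : R).
Proof.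
move=> A B x AB _; rewrite !card_coverU1 !natrD ![_%:R + _%:R - _]addrAC !subrr !add0r ler_nat.
by apply/subset_leq_card/setDS/coverS.
Qed.

End Coverage.

Section ConicCombination.
Variables (R : realFieldType) (T U : finType) (w : T -> R) (f : T -> {set U} -> R).
Hypothesis w_ge0 : forall t, 0 <= w t.

Lemma monotone_setfun_conic :
  (forall t, monotone_setfun (f t)) -> monotone_setfun (fun S => \sum_t w t * f t S).
Proof. by move=> f_mono A B AB; apply: ler_sum => t _; rewrite ler_wpM2l ?f_mono. Qed.

Lemma submodular_setfun_conic :
  (forall t, submodular_setfun (f t)) -> submodular_setfun (fun S => \sum_t w t * f t S).
Proof.
move=> f_sub A B x AB xB; rewrite -!sumrB; apply: ler_sum => t _.
by rewrite -!mulrBr ler_wpM2l ?f_sub.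
Qed.

End ConicCombination.

Lemma expected_cover_monotone_submodular (R : realFieldType) (T U W : finType)
    (w : T -> R) (P : T -> pred W) (Q : T -> U -> pred W) (F : {set U} -> R) :
  (forall t, 0 <= w t) ->
  (forall S, F S = \sum_t w t * #|cover (P t) (Q t) S|%:R) ->
  monotone_setfun F /\ submodular_setfun F.
Proof.
move=> w_ge0 eF; split=> [A B AB | A B x AB xB]; rewrite !eF.
  exact: (monotone_setfun_conic w_ge0 (fun t => card_cover_monotone _ _ _) AB).
exact: (submodular_setfun_conic w_ge0 (fun t => card_cover_submodular _ _ _) AB xB).
Qed.

Lemma outcome_prob_ge0 (R : realFieldType) (V : finType) (E : rel V) (p : V -> V -> R) :
  (forall u v, E u v -> 0 <= p u v <= 1) -> forall X, 0 <= outcome_prob E p X.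
Proof.
move=> p01 X; apply: prodr_ge0 => v _; apply: prodr_ge0 => u _.
by case: ifP => [/p01 /andP [p_ge0 p_le1] | _]; case: ifP; rewrite ?subr_ge0.
Qed.

Lemma rhoU (V : finType) (X : outcome V) (A B : {set V}) :
  rho X (A :|: B) = rho X A :|: rho X B.
Proof.
apply/setP => v; rewrite !inE; apply/existsP/orP => [[a] | [] /existsP [a /andP [aA c]]].
  by rewrite inE => /andP [/orP [] aAB c]; [left | right]; apply/existsP; exists a; rewrite aAB.
- by exists a; rewrite inE aA.
- by exists a; rewrite inE aA orbT.
Qed.

Lemma rhoIU_cover (V : finType) (X : outcome V) (A B T : {set V}) :
  (rho X T :&: A) :|: B =
  cover (fun v => v \in B) (fun a v => (v \in A) && connect (fun u w => u \in X w) a v) T.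
Proof.
apply/setP => v; rewrite !inE orbC; congr (_ || _).
apply/andP/existsP => [[/existsP [a /andP [aT c]] vA] | [a /andP [aT /andP [vA c]]]].
  by exists a; rewrite aT vA c.
by split=> //; apply/existsP; exists a; rewrite aT c.
Qed.

Section Campaigns.
Variables (V : finType) (mu : nat) (XX : profile V mu) (I : 'I_mu -> {set V}).

Definition newly_reached (x : V * 'I_mu) (v : V) : bool :=
  (v \notin rho (XX x.2) (I x.2)) && connect (fun u w => u \in XX x.2 w) x.1 v.

Lemma forall_notin_Vj (n : nat) (v : V) :
  [forall j : 'I_n, v \notin Vj XX I j] = (n <= ncamp XX I v)%N.
Proof.
apply/forallP/idP => [notVj | n_le j]; last first.
  by rewrite inE; apply: contraTneq n_le => ->; rewrite -ltnNge.
by rewrite leqNgt; apply/negP => lt_n; move: (notVj (Ordinal lt_n)); rewrite inE eqxx.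
Qed.

Lemma campaigns_seedU_subset (S : {set V * 'I_mu}) (v : V) :
  [set i | v \in rho (XX i) (I i)] \subset [set i | v \in rho (XX i) (seedU I S i)].
Proof. by apply/subsetP => i; rewrite ![i \in _]inE /seedU rhoU in_setU => ->. Qed.

Lemma ncamp_seedU_ge (S : {set V * 'I_mu}) (v : V) :
  (ncamp XX I v <= ncamp XX (seedU I S) v)%N.
Proof. exact/subset_leq_card/campaigns_seedU_subset. Qed.

Lemma ncamp_seedU_gt (S : {set V * 'I_mu}) (v : V) :
  (ncamp XX I v < ncamp XX (seedU I S) v)%N = [exists x in S, newly_reached x v].
Proof.
rewrite /ncamp (ltn_leqif (subset_leqif_card (campaigns_seedU_subset S v))).
apply/subsetPn/existsP => [[i] | [[s i] /andP [sS /andP [vI c]]]].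
  rewrite ![i \in _]inE /seedU rhoU in_setU => /orP [-> // | vS vI].
  move: vS; rewrite inE => /existsP [s /andP [sS c]].
  by rewrite inE in sS; exists (s, i); rewrite sS /newly_reached /= vI c.
exists i; rewrite ![i \in _]inE // /seedU rhoU in_setU orbC inE.
by apply/orP; left; apply/existsP; exists s; rewrite inE sS.
Qed.

Lemma phi_real_cover (nu : nat) (S : {set V * 'I_mu}) : (2 <= nu)%N ->
  phi_real nu I S XX =
  #|cover (fun v => nu <= ncamp XX I v)%N
          (fun x v => (nu.-1 <= ncamp XX I v)%N && newly_reached x v) S|.
Proof.
move=> nu_ge2; apply: eq_card => v; rewrite !inE forall_notin_Vj.
have -> : [exists x in S, (nu.-1 <= ncamp XX I v)%N && newly_reached x v] =
          (nu.-1 <= ncamp XX I v)%N && [exists x in S, newly_reached x v].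
  by case: (nu.-1 <= _)%N => //=; apply/existsP => -[x]; rewrite andbF.
rewrite -ncamp_seedU_gt; move: (ncamp_seedU_ge S v); lia.
Qed.

End Campaigns.

Section Expectations.
Variables (R : realFieldType) (V : finType) (E : rel V) (mu nu : nat) (I : 'I_mu -> {set V}).
Hypothesis nu_ge2 : (2 <= nu)%N.

Lemma Psi_monotone_submodular (p : V -> V -> R) :
  (forall u v, E u v -> 0 <= p u v <= 1) ->
  monotone_setfun (Psi E p nu I) /\ submodular_setfun (Psi E p nu I).
Proof.
move=> p01; apply: (expected_cover_monotone_submodular (outcome_prob_ge0 p01)).
by move=> T; apply: eq_bigr => X _; rewrite rhoIU_cover.
Qed.

Lemma Phi_corr_monotone_submodular (p : V -> V -> R) :
  (forall u v, E u v -> 0 <= p u v <= 1) ->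
  monotone_setfun (Phi_corr E p nu I) /\ submodular_setfun (Phi_corr E p nu I).
Proof.
move=> p01; apply: (expected_cover_monotone_submodular (outcome_prob_ge0 p01)).
by move=> S; apply: eq_bigr => X _; rewrite phi_real_cover.
Qed.

Lemma Phi_het_monotone_submodular (p : 'I_mu -> V -> V -> R) :
  (forall i u v, E u v -> 0 <= p i u v <= 1) ->
  monotone_setfun (Phi_het E p nu I) /\ submodular_setfun (Phi_het E p nu I).
Proof.
move=> p01; have w_ge0 (XX : profile V mu) : 0 <= \prod_(i < mu) outcome_prob E (p i) (XX i).
  by apply: prodr_ge0 => i _; apply: outcome_prob_ge0 => u v /p01.
apply: (expected_cover_monotone_submodular w_ge0).
by move=> S; apply: eq_bigr => XX _; rewrite phi_real_cover.
Qed.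

End Expectations.

Theorem mainTheorem15 (R : realFieldType) (V : finType) (E : rel V)
    (mu nu : nat) (Hnu : (2 <= nu)%N) (Hmunu : (nu <= mu)%N)
    (I : 'I_mu -> {set V}) :
  (* correlated setting: Psi, for every p : E -> [0,1] *)
  (forall p : V -> V -> R, (forall u v, E u v -> 0 <= p u v <= 1) ->
     monotone_setfun (Psi E p nu I) /\ submodular_setfun (Psi E p nu I)) /\
  (* correlated setting: Phi^{>= nu-1} *)
  (forall p : V -> V -> R, (forall u v, E u v -> 0 <= p u v <= 1) ->
     monotone_setfun (Phi_corr E p nu I) /\ submodular_setfun (Phi_corr E p nu I)) /\
  (* heterogeneous setting: Phi^{>= nu-1} *)
  (forall p : 'I_mu -> V -> V -> R, (forall i u v, E u v -> 0 <= p i u v <= 1) ->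
     monotone_setfun (Phi_het E p nu I) /\ submodular_setfun (Phi_het E p nu I)).
Proof.
split; [exact: Psi_monotone_submodular | split].
- exact: Phi_corr_monotone_submodular.
- exact: Phi_het_monotone_submodular.
Qed.
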